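(* Let $X$ be a separated metric compact Hausdorff space with metric $d$. A binary continuous submetric $\gamma$ on $X$ is reflexive if and only if $d(x,y)\le\gamma((x,i),(y,j))$ for all $x,y\in X$ and $i,j\in\{0,1\}$.
   Context: A metric on a set $X$ is a map $d\colon X\times X\to[0,\infty]$ with $d(x,x)=0$ and $d(x,z)\le d(x,y)+d(y,z)$ (not necessarily symmetric, $\infty$ allowed); separated means $d(x,y)=0=d(y,x)$ implies $x=y$. A separated metric compact Hausdorff space is a compact Hausdorff space with a separated metric continuous $X\times X\to[0,\infty]$ for the upper topology on $[0,\infty]$ (open sets $]u,\infty]$); morphisms are continuous non-expansive maps. $X+X$ is the coproduct with elements $(x,i)$, $i\in\{0,1\}$, coproduct topology and metric $d((x,i),(y,i))=d(x,y)$, $d((x,i),(y,1-i))=\infty$. A binary continuous submetric on $X$ is a (not necessarily separated) metric $\gamma$ on $X+X$, continuous for the upper topology, below the coproduct metric. Its associated corelation is $\binom{q_0}{q_1}\colon X+X\to S:=(X+X)/{\sim_\gamma}$ where $u\sim_\gamma v$ iff $\gamma(u,v)=\gamma(v,u)=0$, $S$ has quotient topology and metric $([u],[v])\mapsto\gamma(u,v)$, $q_i(x)=[(x,i)]$. $\gamma$ is reflexive if there is a continuous non-expansive $e\colon S\to X$ with $e\circ q_0=e\circ q_1=1_X$. *)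

From HB Require Import structures.
From mathcomp Require Import all_boot all_order all_algebra.
From mathcomp Require Import all_classical all_reals all_analysis.
Set Implicit Arguments. Unset Strict Implicit. Unset Printing Implicit Defensive.
Import Order.TTheory GRing.Theory Num.Theory.
Local Open Scope classical_set_scope.
Local Open Scope ring_scope.
Local Open Scope ereal_scope.

Definition is_metric {R : realType} {T : Type} (d : T -> T -> \bar R) : Prop :=
  [/\ forall x y, 0 <= d x y,
      forall x, d x x = 0 &
      forall x y z, d x z <= d x y + d y z].

Definition separated {R : realType} {T : Type} (d : T -> T -> \bar R) : Prop :=
  forall x y, d x y = 0 -> d y x = 0 -> x = y.

(* Continuity of f : T -> [0,+oo] for the upper topology (opens ]u,+oo]). *)
Definition upper_continuous {R : realType} {T : topologicalType} (f : T -> \bar R) : Prop :=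
  forall u : \bar R, open (f @^-1` [set v | u < v]).

Definition metric_compHaus {R : realType} (X : topologicalType) (d : X -> X -> \bar R) : Prop :=
  [/\ compact [set: X], hausdorff_space X, is_metric d, separated d &
      upper_continuous (fun p : X * X => d p.1 p.2)].

(* X + X is modelled as X * bool (bool discrete, so the product topology is the
   coproduct topology); (x, i) is the element x of the i-th summand. *)
Definition coprod_metric {R : realType} {X : Type} (d : X -> X -> \bar R)
  (u v : X * bool) : \bar R :=
  if u.2 == v.2 then d u.1 v.1 else +oo.

Definition binary_cont_submetric {R : realType} (X : topologicalType)
  (d : X -> X -> \bar R) (g : X * bool -> X * bool -> \bar R) : Prop :=
  [/\ is_metric g,
      upper_continuous (fun p : (X * bool) * (X * bool) => g p.1 p.2) &
      forall u v, g u v <= coprod_metric d u v].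

Definition sim_g {R : realType} {T : Type} (g : T -> T -> \bar R) (u v : T) : Prop :=
  g u v = 0 /\ g v u = 0.

(* Reflexivity: there is a continuous non-expansive e : S -> X with
   e \o q_0 = e \o q_1 = id, where S = (X+X)/~g carries the quotient topology and
   the metric [u],[v] |-> g u v.  A map e : S -> X is represented, via the
   universal property of the quotient, by E := e \o q : X + X -> X, which is
   constant on ~g-classes; e is continuous for the quotient topology iff E is
   continuous; non-expansiveness reads d (E u) (E v) <= g u v; and
   e \o q_i = id reads E (x, i) = x. *)
Definition reflexive_submetric {R : realType} (X : topologicalType)
  (d : X -> X -> \bar R) (g : X * bool -> X * bool -> \bar R) : Prop :=
  exists E : X * bool -> X,
    [/\ forall u v, sim_g g u v -> E u = E v,
        continuous E,
        forall u v, d (E u) (E v) <= g u v &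
        forall x i, E (x, i) = x].

From Pilot Require Import Defs.
From HB Require Import structures.
From mathcomp Require Import all_boot all_order all_algebra.
From mathcomp Require Import all_classical all_reals all_analysis.
Import Order.TTheory GRing.Theory Num.Theory.
Local Open Scope classical_set_scope.
Local Open Scope ring_scope.
Local Open Scope ereal_scope.

(* Any retraction E of X + X onto X satisfies E (x, i) = x, so non-expansiveness
   already forces d x y <= g ((x, i), (y, j)).  Conversely the projection
   (x, i) |-> x is a continuous retraction; it is non-expansive exactly under
   this inequality, and it is constant on ~g-classes because g (u, v) = 0 then
   forces d (u.1, v.1) = 0 and d is separated. *)

Section ReflexiveSubmetric.
Variables (R : realType) (X : topologicalType) (d : X -> X -> \bar R).
Variable g : X * bool -> X * bool -> \bar R.

Lemma reflexive_submetric_le :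
  reflexive_submetric d g -> forall x y i j, d x y <= g (x, i) (y, j).
Proof. by move=> [E [_ _ nE EE]] x y i j; have := nE (x, i) (y, j); rewrite !EE. Qed.

Hypothesis d_ge0 : forall x y, 0 <= d x y.
Hypothesis d_sep : Defs.separated d.
Hypothesis d_le_g : forall x y i j, d x y <= g (x, i) (y, j).

Lemma sim_g_fst u v : sim_g g u v -> u.1 = v.1.
Proof.
have d_eq0 x y i j : g (x, i) (y, j) = 0 -> d x y = 0.
  by move=> g0; apply/le_anti; rewrite d_ge0 -g0 d_le_g.
by case: u v => [x i] [y j] [guv gvu]; apply: d_sep; [exact: d_eq0 guv|exact: d_eq0 gvu].
Qed.

Lemma reflexive_submetric_fst : reflexive_submetric d g.
Proof.
exists fst; split => //.
- exact: sim_g_fst.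
- by move=> p; exact: cvg_fst.
- by move=> [x i] [y j]; exact: d_le_g.
Qed.

End ReflexiveSubmetric.

Theorem lemma5p4 (R : realType) (X : topologicalType) (d : X -> X -> \bar R)
  (g : X * bool -> X * bool -> \bar R) :
  metric_compHaus d -> binary_cont_submetric d g ->
  (reflexive_submetric d g <->
   forall (x y : X) (i j : bool), d x y <= g (x, i) (y, j)).
Proof.
move=> [_ _ [d_ge0 _ _] d_sep _] _; split; first exact: reflexive_submetric_le.
exact: reflexive_submetric_fst.
Qed.
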